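(* Let $m\ge n$, $1\le r\le n$, $\delta=r/n$, $\mu\in[0,1)$, $\tau\in\mathbb{Z}_{\ge1}$, $\eta>0$, and suppose Assumption (A3) holds. Then the error terms $\bm e_t^{(i)}$ of PowerSGD+ with MSGD satisfy, for every $t\ge0$, $$\mathbb{E}\Big\|\frac1N\sum_{i=1}^N\bm e_t^{(i)}\Big\|_F^2\le\frac{45\tau^2G^2}{\delta^2}.$$
   Context: Setting: $N$ nodes jointly minimize $f(\bm{X})=\frac1N\sum_{i=1}^N f_i(\bm{X})$ over $\bm{X}\in\mathbb{R}^{m\times n}$, where $f_i(\bm{X})=\mathbb{E}_{\xi^{(i)}\sim\mathcal{D}_i}[F(\bm{X};\xi^{(i)})]$; node $i$ queries stochastic gradients $\nabla F(\bm{X};\xi^{(i)})$, sampled independently across nodes and iterations. Assumption (A3): $\|\nabla f(\bm{X})\|_F^2\le\omega^2$ for all $\bm X$, and $\mathbb{E}\|\frac1N\sum_{i=1}^N\nabla F(\bm{X};\xi^{(i)})\|_F^2\le G^2:=\sigma^2+\omega^2$ for all $\bm X$, where $\sigma^2$ bounds the variance $\mathbb{E}\|\nabla F(\bm{X};\xi^{(i)})-\nabla f_i(\bm{X})\|_F^2$ for all $i$ and $\bm X$. $\mathrm{QR}(\bm A)$, for $\bm A\in\mathbb{R}^{m\times r}$, denotes the factor $\bm Q\in\mathbb{R}^{m\times r}$ with $\bm Q^\top\bm Q=I_r$ of an economic QR decomposition $\bm A=\bm Q\bm R$. PowerSGD+ with MSGD (step size $\eta$, momentum $\mu$, restart period $\tau$,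 rank $r$): initialize $\bm X_0$, $\bm Q_{-1}\in\mathbb{R}^{n\times r}$, $\bm m_{-1}=0$, $\bm e_0^{(i)}=0$. For $t=0,1,\dots$: each node computes $\bm g_t^{(i)}=\nabla F(\bm X_t;\xi_t^{(i)})$ and $\bm\Delta_t^{(i)}=\bm g_t^{(i)}+\bm e_t^{(i)}$; let $\bm\Delta_t=\frac1N\sum_i\bm\Delta_t^{(i)}$. If $t\not\equiv0\pmod\tau$: $\tilde{\bm P}_t=\mathrm{QR}\big(\frac1N\sum_i\bm\Delta_t^{(i)}\bm Q_{t-1}\big)$; if $t\equiv0\pmod\tau$: $\tilde{\bm P}_t$ is the matrix of the top-$r$ left singular vectors of $\bm\Delta_t$. In both cases $\bm Q_t=\frac1N\sum_i(\bm\Delta_t^{(i)})^\top\tilde{\bm P}_t$, $\widehat{\bm\Delta}_t^{(i)}=\tilde{\bm P}_t\tilde{\bm P}_t^\top\bm\Delta_t^{(i)}$, $\widehat{\bm\Delta}_t=\tilde{\bm P}_t\bm Q_t^\top$, $\bm e_{t+1}^{(i)}=\bm\Delta_t^{(i)}-\widehat{\bm\Delta}_t^{(i)}$, $\bm m_t=\mu\bm m_{t-1}+\widehat{\bm\Delta}_t$, $\bm X_{t+1}=\bm X_t-\eta\bm m_t$. *)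

From HB Require Import structures.
From mathcomp Require Import all_boot all_order all_algebra.
From mathcomp Require Import all_classical all_reals all_analysis.

Set Implicit Arguments.
Unset Strict Implicit.
Unset Printing Implicit Defensive.

Import Order.TTheory GRing.Theory Num.Theory.
Local Open Scope classical_set_scope.
Local Open Scope ring_scope.

Section PowerSGDDefs.
Variable R : realType.

Definition frob2 (p q : nat) (A : 'M[R]_(p, q)) : R :=
  \sum_(i < p) \sum_(j < q) (A i j) ^+ 2.

Definition is_QR_factor (p k : nat) (A Q : 'M[R]_(p, k)) : Prop :=
  Q^T *m Q = 1%:M /\
  exists Rm : 'M[R]_k,
    (forall i j : 'I_k, (j < i)%N -> Rm i j = 0) /\ A = Q *m Rm.

Definition is_top_left_sv (p q k : nat) (D : 'M[R]_(p, q)) (P : 'M[R]_(p, k))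
  : Prop :=
  exists (U : 'M[R]_p) (S : 'M[R]_(p, q)) (V : 'M[R]_q),
    U^T *m U = 1%:M /\ V^T *m V = 1%:M /\
        D = U *m S *m V^T /\
        (forall (i : 'I_p) (j : 'I_q), (i : nat) <> j -> S i j = 0) /\
        (forall (i : 'I_p) (j : 'I_q), (i : nat) = j -> 0 <= S i j) /\
        (forall (i1 i2 : 'I_p) (j1 j2 : 'I_q), (i1 : nat) = j1 -> (i2 : nat) = j2 ->
            (i1 <= i2)%N -> S i2 j2 <= S i1 j1) /\
        (forall (a : 'I_p) (j : 'I_k) (c : 'I_p), (c : nat) = j -> P a j = U a c).

Definition mx_measurable d (T : measurableType d) (p q : nat)
  (f : T -> 'M[R]_(p, q)) : Prop :=
  forall (a : 'I_p) (b : 'I_q), measurable_fun setT (fun x => f x a b).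

(** Borel measurability of a matrix map, phrased through compositions
    with measurable random matrices. *)
Definition mx_borel (p q p' q' : nat) (phi : 'M[R]_(p, q) -> 'M[R]_(p', q'))
  : Prop :=
  forall d (T : measurableType d) (f : T -> 'M[R]_(p, q)),
    mx_measurable f -> mx_measurable (fun x => phi (f x)).

Definition oracle_measurable dX (Xi : measurableType dX) (p q : nat)
  (gF : 'M[R]_(p, q) -> Xi -> 'M[R]_(p, q)) : Prop :=
  forall d (T : measurableType d) (f : T -> 'M[R]_(p, q)) (z : T -> Xi),
    mx_measurable f -> measurable_fun setT z ->
    mx_measurable (fun x => gF (f x) (z x)).

Definition mutually_independent d (Om : measurableType d) (P : probability Om R)
  dX (Xi : measurableType dX) (N : nat) (xi : 'I_N -> Om -> Xi) : Prop :=
  forall A : 'I_N -> set Xi, (forall i, measurable (A i)) ->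
    P (\bigcap_(i in [set: 'I_N]) (xi i @^-1` A i)) =
    (\prod_(i < N) P (xi i @^-1` A i))%E.

(** state of PowerSGD+ before iteration t : (X_t, Q_{t-1}, m_{t-1}, (e_t^(i))_i) *)
Record pstate (m n r N : nat) := PState {
  pX : 'M[R]_(m, n);
  pQ : 'M[R]_(n, r);
  pM : 'M[R]_(m, n);
  pE : 'I_N -> 'M[R]_(m, n) }.

Variables (m n r N tau : nat) (eta mu : R).
Variables (dX : measure_display) (Xi : measurableType dX).
Variable gradF : 'M[R]_(m, n) -> Xi -> 'M[R]_(m, n).
Variable qrf : 'M[R]_(m, r) -> 'M[R]_(m, r).
Variable svf : 'M[R]_(m, n) -> 'M[R]_(m, r).

Definition pstep (t : nat) (st : pstate m n r N) (xs : 'I_N -> Xi)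
  : pstate m n r N :=
  let Di := fun i => gradF (pX st) (xs i) + pE st i in
  let D := (N%:R)^-1 *: \sum_(i < N) Di i in
  let Pt := if (t %% tau == 0)%N then svf D
            else qrf ((N%:R)^-1 *: \sum_(i < N) (Di i *m pQ st)) in
  let Qt := (N%:R)^-1 *: \sum_(i < N) ((Di i)^T *m Pt) in
  let hatD := Pt *m Qt^T in
  let Mt := mu *: pM st + hatD in
  PState (pX st - eta *: Mt) Qt Mt (fun i => Di i - Pt *m Pt^T *m Di i).

Variables (dO : measure_display) (Om : measurableType dO) (P : probability Om R).
Variable xi : 'I_N -> Om -> Xi.

Fixpoint prun (t0 : nat) (st : pstate m n r N) (l : seq Om) : pstate m n r N :=
  match l with
  | [::] => st
  | w :: l' => prun t0.+1 (pstep t0 st (fun i => xi i w)) l'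
  end.

(** expectation over k independent rounds (iterated integrals = product law) *)
Fixpoint iterE (k : nat) (h : seq Om -> \bar R) : \bar R :=
  match k with
  | 0 => h [::]
  | k'.+1 => (\int[P]_w iterE k' (fun l => h (w :: l)))%E
  end.

Definition gradf (i : 'I_N) (X : 'M[R]_(m, n)) : 'M[R]_(m, n) :=
  \matrix_(a, b) Rintegral P setT (fun w => gradF X (xi i w) a b).

End PowerSGDDefs.

From HB Require Import structures.
From mathcomp Require Import all_boot all_order all_algebra.
From mathcomp Require Import all_classical all_reals all_analysis.
From mathcomp Require Import measurable_realfun.
From mathcomp Require Import ring lra zify.

Import Order.TTheory GRing.Theory Num.Theory.
Local Open Scope classical_set_scope.
Local Open Scope ring_scope.

Set Implicit Arguments.
Unset Strict Implicit.
Unset Printing Implicit Defensive.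

(* Write e_t for the mean error and g_t for the mean stochastic gradient.
   Since e_{t+1} = D - P P^T D with D = e_t + g_t and P with orthonormal
   columns, ||e_{t+1}||^2 <= c_t ||D||^2, where c_t = 1 - r/n on restart
   rounds (the top-r left singular vectors capture a fraction r/n of ||D||^2)
   and c_t = 1 otherwise.  The expected error after the remaining rounds is
   bounded backwards by affine functions a ||e_t||^2 + b, which integrate one
   round at a time using E||g_t||^2 <= G.  Young's inequality with weight w_t,
   which starts at 2 tau n / r after each restart and grows by one per round,
   keeps the invariant b + a w_t^2 G <= (2 tau n / r + tau)^2 G, and the
   right-hand side is at most 9 tau^2 G (n / r)^2. *)

Section Frobenius.
Variable R : realType.
Implicit Types p q k : nat.

Lemma frob2_trace p q (A : 'M[R]_(p, q)) : frob2 A = \tr (A *m A^T).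
Proof.
rewrite /frob2 /mxtrace; apply: eq_bigr => i _; rewrite mxE.
by apply: eq_bigr => j _; rewrite !mxE expr2.
Qed.

Lemma frob2_ge0 p q (A : 'M[R]_(p, q)) : 0 <= frob2 A.
Proof. by apply: sumr_ge0 => i _; apply: sumr_ge0 => j _; exact: sqr_ge0. Qed.

Lemma frob2_0 p q : frob2 (0 : 'M[R]_(p, q)) = 0.
Proof. by apply: big1 => i _; apply: big1 => j _; rewrite mxE expr0n. Qed.

Lemma frob2_traceT p q (A : 'M[R]_(p, q)) : frob2 A = \tr (A^T *m A).
Proof. by rewrite frob2_trace mxtrace_mulC. Qed.

Lemma frob2_tr p q (A : 'M[R]_(p, q)) : frob2 A^T = frob2 A.
Proof. by rewrite frob2_trace trmxK frob2_traceT. Qed.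

Lemma frob2_orth_mull p q (U : 'M[R]_p) (B : 'M[R]_(p, q)) :
  U^T *m U = 1%:M -> frob2 (U *m B) = frob2 B.
Proof.
move=> orthU; rewrite !frob2_traceT trmx_mul.
by rewrite -mulmxA (mulmxA U^T) orthU mul1mx.
Qed.

Lemma frob2_orth_mulr p q (V : 'M[R]_q) (B : 'M[R]_(p, q)) :
  V^T *m V = 1%:M -> frob2 (B *m V^T) = frob2 B.
Proof. by move=> orthV; rewrite -frob2_tr trmx_mul trmxK frob2_orth_mull ?frob2_tr. Qed.

Lemma frob2D_le p q (A B : 'M[R]_(p, q)) (x : R) : 0 < x ->
  frob2 (A + B) <= (1 + x) * frob2 A + (1 + x^-1) * frob2 B.
Proof.
move=> x_gt0; rewrite /frob2 !mulr_sumr -big_split /=; apply: ler_sum => i _.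
rewrite !mulr_sumr -big_split /=; apply: ler_sum => j _; rewrite mxE.
(* (1 + x) a^2 + (1 + 1/x) b^2 - (a + b)^2 = (x a - b)^2 / x *)
rewrite -subr_ge0 (_ : _ - _ = (x * A i j - B i j) ^+ 2 / x).
  by rewrite divr_ge0 ?sqr_ge0 ?ltW.
by field; rewrite gt_eqF.
Qed.

Lemma frob2_sub_proj p q k (P : 'M[R]_(p, k)) (Y : 'M[R]_(p, q)) :
  P^T *m P = 1%:M -> frob2 (Y - P *m P^T *m Y) = frob2 Y - frob2 (P^T *m Y).
Proof.
move=> orthP; rewrite -mulmxA; set Z := P^T *m Y.
have ZtZ : Z^T *m Z = Y^T *m P *m Z by rewrite trmx_mul trmxK.
rewrite !frob2_traceT -linearB /=; congr (\tr _).
rewrite [(Y - _)^T]linearB /= trmx_mul mulmxBl !mulmxBr.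
rewrite (mulmxA Y^T) -ZtZ -!mulmxA (mulmxA P^T P) orthP mul1mx.
by rewrite subrr subr0.
Qed.

Lemma frob2_proj_le p q k (P : 'M[R]_(p, k)) (Y : 'M[R]_(p, q)) :
  P^T *m P = 1%:M -> frob2 (Y - P *m P^T *m Y) <= frob2 Y.
Proof. by move=> orthP; rewrite frob2_sub_proj // lerBlDr lerDl frob2_ge0. Qed.

End Frobenius.

Lemma nonincreasing_head_avg (R : realFieldType) (g : nat -> R) r n :
  (r <= n)%N -> (forall i j, (i <= j < n)%N -> g j <= g i) ->
  r%:R * \sum_(k < n) g k <= n%:R * \sum_(k < r) g k.
Proof.
move=> le_rn g_noninc; case: r le_rn => [|r] le_rn.
  by rewrite !mul0r big_ord0 mulr0.
rewrite -!(big_mkord xpredT) (big_cat_nat _ (n := r.+1)) //=.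
set A := \sum_(0 <= k < r.+1) g k; set B := \sum_(r.+1 <= k < n) g k.
have A_ge : (r.+1)%:R * g r <= A.
  rewrite -[r.+1 in X in X * _]subn0 mulr_natl -sumr_const_nat.
  by apply: ler_sum_nat => k /andP[_ lt_kr]; apply: g_noninc; lia.
have B_le : B <= (n - r.+1)%:R * g r.
  rewrite mulr_natl -sumr_const_nat; apply: ler_sum_nat => k /andP[le_rk lt_kn].
  by apply: g_noninc; lia.
rewrite natrB // in B_le.
have : r.+1%:R <= n%:R :> R by rewrite ler_nat.
have : 0 <= r.+1%:R :> R by [].
nra.
Qed.

Section TopSingularSubspace.
Variables (R : realType) (m n r : nat).
Hypotheses (le_nm : (n <= m)%N) (le_rn : (r <= n)%N).
Variables (U : 'M[R]_m) (S : 'M[R]_(m, n)) (V : 'M[R]_n) (P : 'M[R]_(m, r)).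
Hypotheses (orthU : U^T *m U = 1%:M) (orthV : V^T *m V = 1%:M).
Hypothesis S_diag : forall (i : 'I_m) (j : 'I_n), (i : nat) <> j -> S i j = 0.
Hypothesis S_ge0 : forall (i : 'I_m) (j : 'I_n), (i : nat) = j -> 0 <= S i j.
Hypothesis S_noninc : forall (i1 i2 : 'I_m) (j1 j2 : 'I_n),
  (i1 : nat) = j1 -> (i2 : nat) = j2 -> (i1 <= i2)%N -> S i2 j2 <= S i1 j1.
Hypothesis P_cols :
  forall (a : 'I_m) (j : 'I_r) (c : 'I_m), (c : nat) = j -> P a j = U a c.

Let le_rm : (r <= m)%N := leq_trans le_rn le_nm.
Let head := widen_ord le_rm.

Lemma top_sv_colsub : P = colsub head U.
Proof. by apply/matrixP => a j; rewrite mxE (P_cols a (c := head j)). Qed.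

Lemma top_sv_trmx_mulU : P^T *m U = rowsub head 1%:M.
Proof.
rewrite top_sv_colsub; apply/matrixP => j c; rewrite -orthU !mxE.
by apply: eq_bigr => a _; rewrite !mxE.
Qed.

Lemma top_sv_orth : P^T *m P = 1%:M.
Proof.
rewrite {2}top_sv_colsub mulmx_colsub top_sv_trmx_mulU.
by apply/matrixP => i j; rewrite !mxE.
Qed.

Lemma frob2_rowsub_head : r%:R / n%:R * frob2 S <= frob2 (rowsub head S).
Proof.
pose rowE (i : 'I_m) := \sum_(j < n) S i j ^+ 2.
pose g k := \sum_(i < m | (i : nat) == k) rowE i.
have g_val (i : 'I_m) : g i = rowE i by apply: big_pred1 => i'; exact: val_eqE.
have g_diag (i : 'I_m) (j : 'I_n) : (i : nat) = j -> g i = S i j ^+ 2.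
  move=> eij; rewrite g_val /rowE (bigD1 j) //= big1 ?addr0 // => j' ne_j'j.
  by rewrite S_diag ?expr0n // => eij'; move: ne_j'j; rewrite -val_eqE /= -eij' eij eqxx.
have g_out k : (n <= k)%N -> g k = 0.
  move=> le_nk; apply: big1 => i /eqP eik; apply: big1 => j _.
  by rewrite S_diag ?expr0n //; move: (ltn_ord j); lia.
have frob2S : frob2 S = \sum_(k < n) g k.
  transitivity (\sum_(i < m) g i); first by apply: eq_bigr => i _; rewrite g_val.
  rewrite (big_ord_widen _ _ le_nm) [LHS](bigID (fun k : 'I_m => (k < n)%N)) /=.
  by rewrite [X in _ + X]big1 ?addr0 // => k; rewrite -leqNgt; exact: g_out.
have frob2_head : frob2 (rowsub head S) = \sum_(k < r) g k.
  by apply: eq_bigr => i _; rewrite (g_val (head i)); apply: eq_bigr => j _; rewrite mxE.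
have g_noninc i j : (i <= j < n)%N -> g j <= g i.
  move=> /andP[le_ij lt_jn]; have lt_in : (i < n)%N by lia.
  rewrite (g_diag (Ordinal (leq_trans lt_jn le_nm)) (Ordinal lt_jn)) //.
  rewrite (g_diag (Ordinal (leq_trans lt_in le_nm)) (Ordinal lt_in)) //.
  by rewrite ler_sqr ?nnegrE; [apply: S_noninc | apply: S_ge0 | apply: S_ge0].
rewrite frob2S frob2_head; case: (posnP n) => [n0 | n_gt0].
  by rewrite [in n%:R]n0 invr0 mulr0 mul0r -frob2_head frob2_ge0.
by rewrite mulrAC ler_pdivrMr ?ltr0n // [X in _ <= X]mulrC nonincreasing_head_avg.
Qed.

Lemma top_sv_energy :
  r%:R / n%:R * frob2 (U *m S *m V^T) <= frob2 (P^T *m (U *m S *m V^T)).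
Proof.
rewrite !mulmxA top_sv_trmx_mulU -rowsubE !frob2_orth_mulr // frob2_orth_mull //.
exact: frob2_rowsub_head.
Qed.

End TopSingularSubspace.

Lemma is_top_left_sv_orth (R : realType) m n r (D : 'M[R]_(m, n)) (P : 'M[R]_(m, r)) :
  (n <= m)%N -> (r <= n)%N -> is_top_left_sv D P -> P^T *m P = 1%:M.
Proof.
move=> le_nm le_rn [U [S [V [orthU [_ [_ [_ [_ [_ P_cols]]]]]]]]].
exact: (top_sv_orth le_nm le_rn orthU P_cols).
Qed.

Lemma is_top_left_sv_energy (R : realType) m n r (D : 'M[R]_(m, n)) (P : 'M[R]_(m, r)) :
  (n <= m)%N -> (r <= n)%N -> is_top_left_sv D P ->
  r%:R / n%:R * frob2 D <= frob2 (P^T *m D).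
Proof.
move=> le_nm le_rn [U [S [V [orthU [orthV [-> [S_diag [S_ge0 [S_noninc P_cols]]]]]]]]].
exact: top_sv_energy.
Qed.

Lemma is_top_left_sv_residual (R : realType) m n r (D : 'M[R]_(m, n)) (P : 'M[R]_(m, r)) :
  (n <= m)%N -> (r <= n)%N -> is_top_left_sv D P ->
  frob2 (D - P *m P^T *m D) <= (1 - r%:R / n%:R) * frob2 D.
Proof.
move=> le_nm le_rn svP; rewrite frob2_sub_proj; last exact: is_top_left_sv_orth svP.
by rewrite mulrBl mul1r lerB // is_top_left_sv_energy.
Qed.

Lemma modn_pred t d : (t %% d != 0)%N -> (t.-1 %% d).+1 = (t %% d)%N.
Proof. by case: t => [|t]; rewrite ?mod0n ?eqxx // modnS; case: ifP. Qed.

Section RestartWeights.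
Variables (R : realFieldType) (tau : nat) (de : R).
Hypotheses (tau_gt0 : (0 < tau)%N) (de_gt0 : 0 < de) (de_le1 : de <= 1).

Definition restart_factor (t : nat) : R := if (t %% tau == 0)%N then 1 - de else 1.

Let s := 2 * tau%:R / de.

Let s_de : s * de = 2 * tau%:R.
Proof. by rewrite /s divfK // gt_eqF. Qed.

Let s_gt0 : 0 < s.
Proof. by rewrite /s divr_gt0 // mulr_gt0 // ltr0n. Qed.

Definition restart_weight (t : nat) : R := s + (t.-1 %% tau)%:R.

Lemma restart_factor_ge0 t : 0 <= restart_factor t.
Proof. by rewrite /restart_factor; case: ifP => _; rewrite ?subr_ge0. Qed.

Lemma restart_weight_gt0 t : 0 < restart_weight t.
Proof. by rewrite /restart_weight ltr_wpDr. Qed.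

Lemma restart_weight_le t : restart_weight t + 1 <= s + tau%:R.
Proof.
by rewrite /restart_weight -addrA lerD2l natr1 ler_nat ltn_pmod.
Qed.

Lemma restart_weightS t :
  restart_factor t * (1 + restart_weight t) ^+ 2 <= restart_weight t.+1 ^+ 2.
Proof.
rewrite /restart_factor /restart_weight /=; case: ifP => [/eqP t0 | /negbT t0].
  have := restart_weight_le t; rewrite /restart_weight t0 addr0 => le_x.
  have phase_ge0 : 0 <= (t.-1 %% tau)%:R :> R by [].
  have s_ge0 := ltW s_gt0.
  apply: le_trans (_ : (1 - de) * (s + tau%:R) ^+ 2 <= _).
    by rewrite ler_wpM2l ?subr_ge0 // ler_sqr ?nnegrE; lra.
  (* [de * s = 2 tau] turns the claim into [- (3 + de) tau^2 <= 0] *)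
  have de_s2 : de * s * s = 2 * tau%:R * s by rewrite mulrC mulrA s_de.
  have de_s_tau : de * s * tau%:R = 2 * tau%:R * tau%:R by rewrite (mulrC de) s_de.
  nra.
by rewrite mul1r -(modn_pred t0) -natr1 (addrC 1) addrA.
Qed.

Lemma restart_bound : (s + tau%:R) ^+ 2 <= 9 * tau%:R ^+ 2 / de ^+ 2.
Proof.
have tau_le : tau%:R <= tau%:R / de by rewrite ler_pdivlMr // ler_piMr // ler0n.
rewrite (_ : 9 * _ / _ = (3 * (tau%:R / de)) ^+ 2); last by field; rewrite gt_eqF.
have s_ge0 := ltW s_gt0; have tau_ge0 : 0 <= tau%:R :> R by [].
by rewrite ler_sqr ?nnegrE; [rewrite /s -mulrA; lra | lra | lra].
Qed.

End RestartWeights.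

Section OneRound.
Variables (R : realType) (m n r N tau : nat) (eta mu : R).
Variables (dX : measure_display) (Xi : measurableType dX).
Variable gradF : 'M[R]_(m, n) -> Xi -> 'M[R]_(m, n).
Variables (qrf : 'M[R]_(m, r) -> 'M[R]_(m, r)) (svf : 'M[R]_(m, n) -> 'M[R]_(m, r)).
Hypotheses (le_nm : (n <= m)%N) (le_rn : (r <= n)%N).
Hypothesis qrfP : forall A, is_QR_factor A (qrf A).
Hypothesis svfP : forall D, is_top_left_sv D (svf D).

Definition mean_error (st : pstate R m n r N) : 'M[R]_(m, n) :=
  (N%:R)^-1 *: \sum_(i < N) pE st i.

Definition mean_grad (X : 'M[R]_(m, n)) (xs : 'I_N -> Xi) : 'M[R]_(m, n) :=
  (N%:R)^-1 *: \sum_(i < N) gradF X (xs i).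

Lemma mean_error_pstep_le t st xs :
  frob2 (mean_error (pstep tau eta mu gradF qrf svf t st xs)) <=
  restart_factor tau (r%:R / n%:R) t * frob2 (mean_error st + mean_grad (pX st) xs).
Proof.
rewrite /mean_error /pstep /=.
set D := (N%:R)^-1 *: \sum_(i < N) (gradF (pX st) (xs i) + pE st i).
set Pt := if _ then _ else _.
have -> : mean_error st + mean_grad (pX st) xs = D.
  by rewrite /D big_split scalerDr addrC.
rewrite sumrB scalerBr -mulmx_sumr scalemxAr -/D /restart_factor /Pt.
case: ifP => _; first exact: (is_top_left_sv_residual le_nm le_rn (svfP D)).
by rewrite mul1r frob2_proj_le //; apply: (qrfP _).1.
Qed.

End OneRound.

Section Integration.
Context (R : realType) (d : measure_display) (T : measurableType d).

Lemma measurable_frob2 p q (f : T -> 'M[R]_(p, q)) :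
  mx_measurable f -> measurable_fun setT (fun w => frob2 (f w)).
Proof.
move=> mf; apply: measurable_sum => i; apply: measurable_sum => j.
by under eq_fun do rewrite expr2; exact: measurable_funM.
Qed.

Lemma mx_measurable_scale_sum p q k (c : R) (F : 'I_k -> T -> 'M[R]_(p, q)) :
  (forall i, mx_measurable (F i)) -> mx_measurable (fun w => c *: \sum_(i < k) F i w).
Proof.
move=> mF a b; under eq_fun do rewrite mxE summxE.
by apply: measurable_funM => //; apply: measurable_sum => i; exact: mF.
Qed.

(* No measurability is needed: the integral of a nonnegative function is a
   supremum over the simple functions below it. *)
Lemma ge0_le_integral_nomeas (mu : {measure set T -> \bar R}) (f g : T -> \bar R) :
  (forall x, (0 <= f x)%E) -> (forall x, (f x <= g x)%E) ->
  (\int[mu]_x f x <= \int[mu]_x g x)%E.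
Proof.
move=> f_ge0 le_fg; have g_ge0 x : (0 <= g x)%E by apply: le_trans (le_fg x).
rewrite !ge0_integralE //=; apply: ge_ereal_sup => _ [h /= le_hf <-].
apply: ereal_sup_ubound; exists h => //= x; apply: le_trans (le_hf x) _.
by rewrite /patch /=; case: ifP.
Qed.

Lemma integral_affine_le (P : probability T R) (g : T -> R) (a b G : R) :
  measurable_fun setT g -> (forall w, 0 <= g w) -> 0 <= a -> 0 <= b ->
  (\int[P]_w (g w)%:E <= G%:E)%E -> (\int[P]_w (a + b * g w)%:E <= (a + b * G)%:E)%E.
Proof.
move=> mg g_ge0 a_ge0 b_ge0 intg_le.
under eq_integral do rewrite EFinD EFinM.
rewrite ge0_integralD //; last 2 first.
- by move=> w _; rewrite lee_fin mulr_ge0.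
- by apply/measurable_EFinP; apply: measurable_funM.
rewrite integral_cst //= probability_setT mule1 ge0_integralZl_EFin //; last 2 first.
- by move=> w _; rewrite lee_fin.
- exact/measurable_EFinP.
rewrite EFinD EFinM leeD2l // lee_pmul //.
by apply: integral_ge0 => w _; rewrite lee_fin.
Qed.

End Integration.

Lemma iterE_ge0 (R : realType) d (T : measurableType d) (P : probability T R) k
  (h : seq T -> \bar R) : (forall l, (0 <= h l)%E) -> (0 <= iterE P k h)%E.
Proof.
elim: k h => [|k IHk] h h_ge0 /=; first exact: h_ge0.
by apply: integral_ge0 => w _; apply: IHk.
Qed.

Section ExpectedError.
Variables (R : realType) (m n r N tau : nat) (eta mu G : R).
Variables (dX : measure_display) (Xi : measurableType dX).
Variables (dO : measure_display) (Om : measurableType dO) (P : probability Om R).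
Variable xi : 'I_N -> Om -> Xi.
Variable gradF : 'M[R]_(m, n) -> Xi -> 'M[R]_(m, n).
Variables (qrf : 'M[R]_(m, r) -> 'M[R]_(m, r)) (svf : 'M[R]_(m, n) -> 'M[R]_(m, r)).
Hypotheses (le_nm : (n <= m)%N) (r_gt0 : (0 < r)%N) (le_rn : (r <= n)%N).
Hypothesis tau_gt0 : (0 < tau)%N.
Hypothesis qrfP : forall A, is_QR_factor A (qrf A).
Hypothesis svfP : forall D, is_top_left_sv D (svf D).
Hypothesis xi_measurable : forall i, measurable_fun setT (xi i).
Hypothesis gradF_measurable : oracle_measurable gradF.
Hypothesis mean_grad_moment : forall X,
  (\int[P]_w (frob2 (mean_grad gradF X (fun i => xi i w)))%:E <= G%:E)%E.

Let de : R := r%:R / n%:R.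
Let c := restart_factor tau de.
Let wt := restart_weight tau de.
Let K := (2 * tau%:R / de + tau%:R) ^+ 2 * G.

Let de_gt0 : 0 < de.
Proof. by rewrite divr_gt0 // ltr0n; lia. Qed.

Let de_le1 : de <= 1.
Proof. by rewrite ler_pdivrMr ?ltr0n ?mul1r ?ler_nat //; lia. Qed.

Let G_ge0 : 0 <= G.
Proof.
rewrite -lee_fin; apply: le_trans (mean_grad_moment 0).
by apply: integral_ge0 => x _; rewrite lee_fin frob2_ge0.
Qed.

Definition error_after (k t0 : nat) (st : pstate R m n r N) : \bar R :=
  iterE P k (fun l => (frob2 (mean_error (prun tau eta mu gradF qrf svf xi t0 st l)))%:E).

Lemma measurable_mean_grad X :
  measurable_fun setT (fun w => frob2 (mean_grad gradF X (fun i => xi i w))).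
Proof.
apply: measurable_frob2; apply: mx_measurable_scale_sum => i.
apply: (@gradF_measurable _ _ (fun=> X) (xi i)) => // a b; exact: measurable_cst.
Qed.

Lemma expected_round_le a b t0 st x : 0 <= a -> 0 <= b -> 0 < x ->
  (\int[P]_o (a * frob2 (mean_error
                  (pstep tau eta mu gradF qrf svf t0 st (fun i => xi i o))) + b)%:E
   <= (b + a * c t0 * ((1 + x^-1) * frob2 (mean_error st) + (1 + x) * G))%:E)%E.
Proof.
move=> a_ge0 b_ge0 x_gt0.
have c_ge0 : 0 <= c t0 := restart_factor_ge0 tau de_le1 t0.
have x_ge0 := ltW x_gt0; have xV_gt0 : 0 < x^-1 by rewrite invr_gt0.
set e := frob2 (mean_error st); have e_ge0 : 0 <= e := frob2_ge0 _.
pose g o := frob2 (mean_grad gradF (pX st) (fun i => xi i o)).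
pose alpha := b + a * c t0 * (1 + x^-1) * e.
pose beta := a * c t0 * (1 + x).
have alpha_ge0 : 0 <= alpha by rewrite addr_ge0 // !mulr_ge0 // addr_ge0 // ltW.
have beta_ge0 : 0 <= beta by rewrite !mulr_ge0 // addr_ge0.
have round_le o :
    a * frob2 (mean_error (pstep tau eta mu gradF qrf svf t0 st (fun i => xi i o))) + b
    <= alpha + beta * g o.
  have young :=
    frob2D_le (mean_error st) (mean_grad gradF (pX st) (fun i => xi i o)) xV_gt0.
  rewrite invrK -/e -/(g o) in young.
  have step := mean_error_pstep_le tau eta mu gradF le_nm le_rn qrfP svfP t0 st
    (fun i => xi i o).
  apply: le_trans (_ : a * (c t0 * ((1 + x^-1) * e + (1 + x) * g o)) + b <= _).
    by rewrite lerD2r ler_wpM2l //; apply: le_trans step _; rewrite ler_wpM2l.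
  by rewrite /alpha /beta; lra.
apply: le_trans (ge0_le_integral_nomeas P (g := fun o => (alpha + beta * g o)%:E) _ _) _.
- by move=> o; rewrite lee_fin addr_ge0 // mulr_ge0 // frob2_ge0.
- by move=> o; rewrite lee_fin round_le.
apply: le_trans (integral_affine_le _ _ alpha_ge0 beta_ge0 (mean_grad_moment (pX st))) _.
- exact: measurable_mean_grad.
- by move=> o; exact: frob2_ge0.
by rewrite lee_fin /alpha /beta; lra.
Qed.

Lemma error_after_affine k t0 : exists a b, [/\ 0 <= a, 0 <= b,
  b + a * (wt t0 ^+ 2 * G) <= K &
  forall st, (error_after k t0 st <= (a * frob2 (mean_error st) + b)%:E)%E].
Proof.
elim: k t0 => [|k IHk] t0.
  exists 1, 0; split=> // [|st]; last by rewrite mul1r addr0.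
  have wt_gt0 : 0 < wt t0 := restart_weight_gt0 tau_gt0 de_gt0 t0.
  have wt_le : wt t0 + 1 <= 2 * tau%:R / de + tau%:R := restart_weight_le de tau_gt0 t0.
  by rewrite add0r mul1r ler_wpM2r // ler_sqr ?nnegrE; lra.
have [a [b [a_ge0 b_ge0 invariant bound]]] := IHk t0.+1.
have x_gt0 : 0 < wt t0 := restart_weight_gt0 tau_gt0 de_gt0 t0.
have c_ge0 : 0 <= c t0 := restart_factor_ge0 tau de_le1 t0.
set x := wt t0 in x_gt0 *; have x_ge0 := ltW x_gt0.
have xV_ge0 : 0 <= x^-1 by rewrite invr_ge0.
exists (a * c t0 * (1 + x^-1)), (b + a * c t0 * (1 + x) * G); split.
- by rewrite !mulr_ge0 // addr_ge0.
- by rewrite addr_ge0 // !mulr_ge0 // addr_ge0.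
- apply: le_trans invariant; rewrite -addrA lerD2l.
  (* [(1 + 1/x) x^2 = (1 + x) x] recombines the two terms into [(1 + x)^2] *)
  rewrite (_ : _ + _ = a * (c t0 * (1 + x) ^+ 2 * G)); last by field; rewrite gt_eqF.
  by rewrite ler_wpM2l // ler_wpM2r // restart_weightS.
move=> st; rewrite /error_after /=.
apply: le_trans (ge0_le_integral_nomeas P _ (fun o => bound _)) _.
  by move=> o; apply: iterE_ge0 => l; rewrite lee_fin frob2_ge0.
apply: le_trans (expected_round_le t0 st a_ge0 b_ge0 x_gt0) _.
by rewrite lee_fin; lra.
Qed.

Lemma error_after_le k t0 st : mean_error st = 0 ->
  (error_after k t0 st <= (9 * tau%:R ^+ 2 * G / de ^+ 2)%:E)%E.
Proof.
move=> st0; have [a [b [a_ge0 b_ge0 invariant bound]]] := error_after_affine k t0.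
apply: le_trans (bound st) _; rewrite st0 frob2_0 mulr0 add0r lee_fin.
apply: le_trans (_ : K <= _).
  by apply: le_trans invariant; rewrite lerDl mulr_ge0 // mulr_ge0 // sqr_ge0.
rewrite /K [X in _ <= X]mulrAC ler_wpM2r //.
exact: restart_bound.
Qed.

End ExpectedError.

Theorem lemma3 (R : realType) (m n r N tau : nat) (eta mu : R)
  (dX : measure_display) (Xi : measurableType dX)
  (dO : measure_display) (Om : measurableType dO) (P : probability Om R)
  (xi : 'I_N -> Om -> Xi)
  (gradF : 'M[R]_(m, n) -> Xi -> 'M[R]_(m, n))
  (qrf : 'M[R]_(m, r) -> 'M[R]_(m, r))
  (svf : 'M[R]_(m, n) -> 'M[R]_(m, r))
  (sigma omega : R)
  (X0 : 'M[R]_(m, n)) (Qinit : 'M[R]_(n, r)) :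
  (0 < N)%N -> (n <= m)%N -> (1 <= r)%N -> (r <= n)%N ->
  0 <= mu -> mu < 1 -> (1 <= tau)%N -> 0 < eta ->
  (* the QR and top-r SVD routines do what they claim *)
  (forall A, is_QR_factor A (qrf A)) ->
  (forall D, is_top_left_sv D (svf D)) ->
  (* measurability (implicit in the paper) *)
  (forall i, measurable_fun setT (xi i)) ->
  oracle_measurable gradF -> mx_borel qrf -> mx_borel svf ->
  (* the N samples of a round are independent (rounds are independent by
     construction of [iterE]) *)
  mutually_independent P xi ->
  (* Assumption (A3) *)
  (forall i X a b, P.-integrable setT (fun w => (gradF X (xi i w) a b)%:E)) ->
  (forall X, frob2 ((N%:R)^-1 *: \sum_(i < N) gradf gradF P xi i X) <= omega ^+ 2) ->
  (forall i X, (\int[P]_w (frob2 (gradF X (xi i w) - gradf gradF P xi i X))%:E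
                 <= (sigma ^+ 2)%:E)%E) ->
  (forall X, (\int[P]_w (frob2 ((N%:R)^-1 *: \sum_(i < N) gradF X (xi i w)))%:E
                 <= (sigma ^+ 2 + omega ^+ 2)%:E)%E) ->
  (* conclusion, for every t *)
  forall t : nat,
    (iterE P t (fun l =>
       (frob2 ((N%:R)^-1 *: \sum_(i < N)
          pE (prun tau eta mu gradF qrf svf xi 0
                (PState X0 Qinit 0 (fun _ => 0)) l) i))%:E)
     <= (45 * (tau%:R) ^+ 2 * (sigma ^+ 2 + omega ^+ 2)
          / ((r%:R / n%:R) ^+ 2))%:E)%E.
Proof.
move=> _ le_nm r_gt0 le_rn _ _ tau_gt0 _ qrfP svfP xi_meas gradF_meas.
move=> _ _ _ _ _ _ moment t.
apply: le_trans (error_after_le eta mu le_nm r_gt0 le_rn tau_gt0 qrfP svfP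
  xi_meas gradF_meas moment t 0 _) _; first by rewrite /mean_error big1 ?scaler0.
have G_ge0 : 0 <= sigma ^+ 2 + omega ^+ 2 by rewrite addr_ge0 ?sqr_ge0.
by rewrite lee_fin !ler_wpM2r ?invr_ge0 ?exprn_ge0 ?ler0n ?ler_nat.
Qed.
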